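(* Let $\mathcal{F},G:\mathbb{R}^p\times\mathbb{R}^q\to\mathbb{R}$ satisfy the standing assumptions (A1) and (A2) with constants $L>0$ and $M<\infty$, and fix $\delta>0$ and $\xi\in(0,1)$. Suppose the learning-rate sequences $(\eta_w^{(t)})_{t\ge1}$, $(\eta_\alpha^{(t)})_{t\ge1}$ are positive and satisfy $$\sum_{t=1}^\infty\eta_\alpha^{(t)}<\infty,\qquad \sum_{t=1}^\infty\eta_w^{(t)}=\infty,\qquad \sum_{t=1}^\infty\big(\eta_w^{(t)}\big)^2<\infty,$$ $$\eta_\alpha^{(t)}<\eta_w^{(t)}<\min\Big(\frac{1-\xi}{L},1\Big)\quad\text{for all }t\ge1.$$ Let $(w^t,\alpha^t)_{t\ge1}$ be generated by the EBOMLC iteration from an arbitrary initial point. Then $$\lim_{t\to\infty}\big\|\nabla_w\mathcal{F}(w^t,\alpha^t)\big\|=0.$$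
   Context: Notation: $\|\cdot\|$ is the Euclidean norm; for a function $\Phi(w,\alpha)$ of $(w,\alpha)\in\mathbb{R}^p\times\mathbb{R}^q$, $\nabla\Phi=(\nabla_w\Phi,\nabla_\alpha\Phi)$ denotes the full gradient in the joint variable. Standing assumptions. (A1) $\mathcal{F}$ and $G$ are differentiable on $\mathbb{R}^p\times\mathbb{R}^q$ and $\nabla\mathcal{F}$, $\nabla G$ are $L$-Lipschitz with respect to the joint variable $(w,\alpha)$, for some $L>0$. (A2) There is a finite $M$ such that for all $(w,\alpha)$: $|\mathcal{F}(w,\alpha)|\le M$, $|G(w,\alpha)|\le M$, $\|\nabla\mathcal{F}(w,\alpha)\|\le M$, $\|\nabla G(w,\alpha)\|\le M$. EBOMLC iteration. Fix constants $\delta>0$, $\xi\in(0,1)$ and positive learning rates $\eta_w^{(t)},\eta_\alpha^{(t)}$. Given $(w^t,\alpha^t)$, set $w^t_{(1)}=w^t-\eta_w^{(t)}\nabla_wG(w^t,\alpha^t)$ and define $\mathcal{Q}_t(w,\alpha)=G(w,\alpha)-G(w^t_{(1)},\alpha)$, where $w^t_{(1)}$ is treated as a constant when differentiating, so that $$\nabla\mathcal{Q}(w^t,\alpha^t):=\nabla G(w^t,\alpha^t)-\nabla G(w^t_{(1)},\alpha^t),$$ with components $\nabla_w\mathcal{Q},\nabla_\alpha\mathcal{Q}$. Define $$\bar\beta_t=\max\Big(\delta-\frac{\nabla_w\mathcal{F}(w^t,\alpha^t)^T\nabla_w\mathcal{Q}(w^t,\alpha^t)}{\|\nabla\mathcal{Q}(w^t,\alpha^t)\|^2},\,0\Big)$$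 if $\nabla\mathcal{Q}(w^t,\alpha^t)\neq0$, and $\bar\beta_t=0$ otherwise. Then update $$w^{t+1}=w^t-\eta_w^{(t)}\big(\nabla_w\mathcal{F}(w^t,\alpha^t)+\xi\bar\beta_t\nabla_w\mathcal{Q}(w^t,\alpha^t)\big),$$ $$\alpha^{t+1}=\alpha^t-\eta_\alpha^{(t)}\big(\nabla_\alpha\mathcal{F}(w^t,\alpha^t)+\xi\bar\beta_t\nabla_\alpha\mathcal{Q}(w^t,\alpha^t)\big).$$ *)

(* Points of R^p x R^q are row vectors 'rV[R]_(p+q);
   w = lsubmx z, alpha = rsubmx z. *)
From HB Require Import structures.
From mathcomp Require Import all_boot all_order all_algebra.
From mathcomp Require Import all_classical all_reals all_analysis.
Set Implicit Arguments. Unset Strict Implicit. Unset Printing Implicit Defensive.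
Import Order.TTheory GRing.Theory Num.Theory.
Import numFieldNormedType.Exports.
Local Open Scope ring_scope.

Section Defs.
Variable R : realType.

Definition dotv n (u v : 'rV[R]_n) : R := \sum_(i < n) u ord0 i * v ord0 i.
Definition enorm n (u : 'rV[R]_n) : R := Num.sqrt (dotv u u).

Definition grad n (f : 'rV[R]_n -> R) (x : 'rV[R]_n) : 'rV[R]_n :=
  \row_(i < n) ('D_(delta_mx ord0 i) f x).

Variables p q : nat.
Notation pt := ('rV[R]_(p + q)).

Definition joint (w : 'rV[R]_p) (a : 'rV[R]_q) : pt := row_mx w a.
Definition gradw (f : pt -> R) (z : pt) : 'rV[R]_p := lsubmx (grad f z).
Definition grada (f : pt -> R) (z : pt) : 'rV[R]_q := rsubmx (grad f z).

Definition A1 (L : R) (f : pt -> R) : Prop :=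
  (forall z, differentiable f z) /\
  (forall z1 z2, enorm (grad f z1 - grad f z2) <= L * enorm (z1 - z2)).
Definition A2 (M : R) (f : pt -> R) : Prop :=
  forall z, `|f z| <= M /\ enorm (grad f z) <= M.

Definition w1 (G : pt -> R) (etaw : R) (z : pt) : 'rV[R]_p :=
  lsubmx z - etaw *: gradw G z.
Definition gradQ (G : pt -> R) (etaw : R) (z : pt) : pt :=
  grad G z - grad G (joint (w1 G etaw z) (rsubmx z)).
Definition betabar (F G : pt -> R) (delta etaw : R) (z : pt) : R :=
  let gQ := gradQ G etaw z in
  if gQ != 0 then
    Num.max (delta - dotv (gradw F z) (lsubmx gQ) / (enorm gQ ^+ 2)) 0
  else 0.
Definition ebomlc_step (F G : pt -> R) (delta xi etaw etaa : R) (z : pt) : pt :=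
  let gQ := gradQ G etaw z in
  let b := betabar F G delta etaw z in
  joint (lsubmx z - etaw *: (gradw F z + (xi * b) *: lsubmx gQ))
        (rsubmx z - etaa *: (grada F z + (xi * b) *: rsubmx gQ)).

End Defs.

(* Along the iteration F decreases up to summable errors.  The L-smooth descent
   inequality applied to the EBOMLC direction gives
     F(z^{t+1}) <= F(z^t) - (1 - xi) eta_w ||grad_w F||^2 + O(eta_w^2) + O(eta_alpha),
   because the correction xi * betabar * grad Q costs at most
   xi ||grad_w F||^2 + delta |<grad_w F, grad_w Q>|, and ||grad Q|| = O(eta_w) as Q
   compares G at w and one gradient step away from w.  Summing and using |F| <= M gives
   sum_t eta_w ||grad_w F(z^t)||^2 < oo.  The norms ||grad_w F(z^t)|| move by O(eta_w)
   per step; once the tail of the weighted sum is below c^3/K, a value above 2c would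
   keep them above c forever (the tail caps the accumulated step length, hence the
   drift), so the tail of sum_t eta_w would be finite, contradicting sum_t eta_w = oo. *)

From HB Require Import structures.
From mathcomp Require Import all_boot all_order all_algebra.
From mathcomp Require Import all_classical all_reals all_analysis.
From mathcomp Require Import ring lra.
Import Order.TTheory GRing.Theory Num.Theory.
Import numFieldNormedType.Exports.
Local Open Scope classical_set_scope.
Local Open Scope ring_scope.
Set Implicit Arguments. Unset Strict Implicit. Unset Printing Implicit Defensive.

Section Euclid.
Variables (R : realType) (n : nat).
Implicit Types u v w : 'rV[R]_n.

Lemma dotvC u v : dotv u v = dotv v u.
Proof. by apply: eq_bigr => i _; rewrite mulrC. Qed.

Lemma dotvDl u v w : dotv (u + v) w = dotv u w + dotv v w.
Proof. by rewrite /dotv -big_split; apply: eq_bigr => i _; rewrite mxE mulrDl. Qed.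

Lemma dotvZl a u v : dotv (a *: u) v = a * dotv u v.
Proof. by rewrite /dotv mulr_sumr; apply: eq_bigr => i _; rewrite mxE mulrA. Qed.

Lemma dotvNl u v : dotv (- u) v = - dotv u v.
Proof. by rewrite -scaleN1r dotvZl mulN1r. Qed.

Lemma dotvBl u v w : dotv (u - v) w = dotv u w - dotv v w.
Proof. by rewrite dotvDl dotvNl. Qed.

Lemma dotvDr u v w : dotv w (u + v) = dotv w u + dotv w v.
Proof. by rewrite dotvC dotvDl !(dotvC w). Qed.

Lemma dotvZr a u v : dotv v (a *: u) = a * dotv v u.
Proof. by rewrite dotvC dotvZl dotvC. Qed.

Lemma dotvNr u v : dotv v (- u) = - dotv v u.
Proof. by rewrite dotvC dotvNl dotvC. Qed.

Lemma dotvBr u v w : dotv w (u - v) = dotv w u - dotv w v.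
Proof. by rewrite dotvDr dotvNr. Qed.

Lemma dotv0l u : dotv 0 u = 0.
Proof. by rewrite -(scale0r 0) dotvZl mul0r. Qed.

Lemma dotvv_ge0 u : 0 <= dotv u u.
Proof. by apply: sumr_ge0 => i _; rewrite -expr2 sqr_ge0. Qed.

Lemma dotvv_eq0 u : dotv u u = 0 -> u = 0.
Proof.
move=> /eqP; rewrite psumr_eq0 => [/allP u0|i _]; last by rewrite -expr2 sqr_ge0.
apply/rowP => i; rewrite mxE.
by have /implyP/(_ isT) := u0 i (mem_index_enum i); rewrite mulf_eq0 orbb => /eqP.
Qed.

Lemma enorm_ge0 u : 0 <= enorm u.
Proof. exact: sqrtr_ge0. Qed.

Lemma enorm_sqr u : enorm u ^+ 2 = dotv u u.
Proof. by rewrite sqr_sqrtr // dotvv_ge0. Qed.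

Lemma enorm_eq0 u : enorm u = 0 -> u = 0.
Proof. by move=> u0; apply: dotvv_eq0; rewrite -enorm_sqr u0 expr0n. Qed.

Lemma enormZ a u : enorm (a *: u) = `|a| * enorm u.
Proof. by rewrite /enorm dotvZl dotvZr mulrA -expr2 sqrtrM ?sqr_ge0 // sqrtr_sqr. Qed.

Lemma enormN u : enorm (- u) = enorm u.
Proof. by rewrite -scaleN1r enormZ normrN1 mul1r. Qed.

Lemma CauchySchwarz_dotv u v : `|dotv u v| <= enorm u * enorm v.
Proof.
have [v0|v_neq0] := eqVneq (dotv v v) 0.
  by rewrite (dotvv_eq0 v0) dotvC dotv0l normr0 mulr_ge0 ?enorm_ge0.
have v_gt0 : 0 < dotv v v by rewrite lt_def v_neq0 dotvv_ge0.
set A := dotv u u; set B := dotv v v; set C := dotv u v.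
(* expand 0 <= |B u - C v|^2 *)
have := dotvv_ge0 (B *: u - C *: v).
rewrite !(dotvBl, dotvBr, dotvZl, dotvZr) -/A -/B -/C (dotvC v u) -/C => h.
have C2 : C ^+ 2 <= A * B.
  have : 0 <= B * (A * B - C ^+ 2) by nra.
  by rewrite pmulr_rge0 // subr_ge0.
rewrite /enorm -sqrtrM ?dotvv_ge0 // -sqrtr_sqr; exact: ler_wsqrtr.
Qed.

Lemma ler_enormD u v : enorm (u + v) <= enorm u + enorm v.
Proof.
rewrite -[X in _ <= X]ger0_norm ?addr_ge0 ?enorm_ge0 // -sqrtr_sqr.
apply: ler_wsqrtr; rewrite dotvDl !dotvDr (dotvC v u) sqrrD !enorm_sqr.
have := CauchySchwarz_dotv u v; have := ler_norm (dotv u v); lra.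
Qed.

Lemma ler_enorm_dist u v : `|enorm u - enorm v| <= enorm (u - v).
Proof.
have := ler_enormD (u - v) v; have := ler_enormD (v - u) u.
rewrite !subrK -opprB enormN ler_norml => *; apply/andP; split; lra.
Qed.

End Euclid.

Section Blocks.
Variables (R : realType) (n1 n2 : nat).

Lemma dotv_row_mx (a c : 'rV[R]_n1) (b d : 'rV[R]_n2) :
  dotv (row_mx a b) (row_mx c d) = dotv a c + dotv b d.
Proof.
rewrite /dotv big_split_ord /=; congr (_ + _); apply: eq_bigr => i _;
  by rewrite ?row_mxEl ?row_mxEr.
Qed.

Lemma enorm_row_mx0 (a : 'rV[R]_n1) : enorm (row_mx a (0 : 'rV[R]_n2)) = enorm a.
Proof. by rewrite /enorm dotv_row_mx dotv0l addr0. Qed.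

Lemma enorm_row_mx_le (a : 'rV[R]_n1) (b : 'rV[R]_n2) :
  enorm (row_mx a b) <= enorm a + enorm b.
Proof.
have -> : row_mx a b = row_mx a 0 + row_mx 0 b by rewrite add_row_mx addr0 add0r.
apply: le_trans (ler_enormD _ _) _; rewrite enorm_row_mx0 lerD2l.
by rewrite /enorm dotv_row_mx dotv0l add0r.
Qed.

Lemma enorm_lsubmx (u : 'rV[R]_(n1 + n2)) : enorm (lsubmx u) <= enorm u.
Proof.
by rewrite -{2}(hsubmxK u) /enorm dotv_row_mx ler_wsqrtr // lerDl dotvv_ge0.
Qed.

Lemma enorm_rsubmx (u : 'rV[R]_(n1 + n2)) : enorm (rsubmx u) <= enorm u.
Proof.
by rewrite -{2}(hsubmxK u) /enorm dotv_row_mx ler_wsqrtr // lerDr dotvv_ge0.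
Qed.

End Blocks.

Section Smooth.
Variables (R : realType) (n : nat) (f : 'rV[R]_n -> R).
Hypothesis df : forall x, differentiable f x.

Lemma derive_grad x h : 'D_h f x = dotv (grad f x) h.
Proof.
rewrite deriveE // {1}(row_sum_delta h) linear_sum /dotv.
apply: eq_bigr => i _; rewrite linearZ /= mxE -deriveE //.
by rewrite /GRing.scale /= mulrC.
Qed.

Lemma MVT_grad x h :
  exists2 c : R, 0 < c < 1 & f (h + x) - f x = dotv (grad f (c *: h + x)) h.
Proof.
pose phi (s : R) := f (s *: h + x).
have phi_derive (s : R) : is_derive s 1 phi (dotv (grad f (s *: h + x)) h).
  have quotE : (fun t : R => t^-1 *: ((phi \o shift s) (t *: 1) - phi s)) =
      (fun t => t^-1 *: ((f \o shift (s *: h + x)) (t *: h) - f (s *: h + x))).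
    by apply: funext => t /=; rewrite /phi [_%:A]mulr1 scalerDl addrA.
  apply: DeriveDef; first by rewrite /derivable quotE; exact: diff_derivable.
  by rewrite /derive quotE -/(derive f _ h) derive_grad.
have phi_cont : {within `[0, 1], continuous phi}.
  by apply: derivable_within_continuous => s _; have ds := phi_derive s; exact: ex_derive.
have [c c01] := MVT ltr01 (fun s _ => phi_derive s) phi_cont.
rewrite /phi scale1r scale0r add0r subr0 mulr1 => ->.
by exists c; rewrite ?(itvP c01).
Qed.

Lemma descent_lemma (L : R) x h : 0 <= L ->
  (forall x1 x2, enorm (grad f x1 - grad f x2) <= L * enorm (x1 - x2)) ->
  f (h + x) <= f x + dotv (grad f x) h + L * enorm h ^+ 2.
Proof.
move=> L0 lip; have [c /andP[c0 c1] mvt] := MVT_grad x h.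
suff : f (h + x) - f x - dotv (grad f x) h <= L * enorm h ^+ 2 by lra.
rewrite mvt -dotvBl.
apply: le_trans (ler_norm _) _; apply: le_trans (CauchySchwarz_dotv _ _) _.
have := lip (c *: h + x) x; rewrite addrK enormZ gtr0_norm // => lipc.
apply: le_trans (ler_wpM2r (enorm_ge0 h) lipc) _.
have : 0 <= L * enorm h ^+ 2 * (1 - c).
  by apply: mulr_ge0; [exact: mulr_ge0 (sqr_ge0 _) | rewrite subr_ge0 ltW].
nra.
Qed.

End Smooth.

Lemma maxr_sub0_le (R : realDomainType) (d u : R) :
  0 <= d -> Num.max (d - u) 0 <= d + `|u|.
Proof.
move=> d0; rewrite ge_max addr_ge0 // andbT lerD2l.
by rewrite -normrN ler_norm.
Qed.

Lemma maxr_sub0_mul_ge (R : realDomainType) (d u : R) :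
  0 <= d -> - d * `|u| - u ^+ 2 <= Num.max (d - u) 0 * u.
Proof.
move=> d0; have := ler_norm u; have := ler_norm (- u); rewrite normrN.
case: (leP (d - u) 0) => _ *; [rewrite mul0r | ]; nra.
Qed.

Section Regularity.
Variables (R : realType) (p q : nat) (f : 'rV[R]_(p + q) -> R) (L M : R).

Lemma A2_ge0 : A2 M f -> 0 <= M.
Proof. by move=> bf; apply: le_trans (bf 0).1. Qed.

Lemma enorm_gradw_le : A2 M f -> forall x, enorm (gradw f x) <= M.
Proof. by move=> bf x; apply: le_trans (enorm_lsubmx _) (bf x).2. Qed.

Lemma enorm_grada_le : A2 M f -> forall x, enorm (grada f x) <= M.
Proof. by move=> bf x; apply: le_trans (enorm_rsubmx _) (bf x).2. Qed.

Lemma enorm_gradw_lipschitz : A1 L f -> forall x y,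
  `|enorm (gradw f x) - enorm (gradw f y)| <= L * enorm (x - y).
Proof.
move=> [_ lip] x y; apply: le_trans (ler_enorm_dist _ _) _.
by rewrite /gradw -linearB; apply: le_trans (enorm_lsubmx _) (lip x y).
Qed.

End Regularity.

Section Step.
Variables (R : realType) (p q : nat) (F G : 'rV[R]_(p + q) -> R).
Variables (L M delta xi ew ea : R) (z : 'rV[R]_(p + q)).
Hypotheses (L_ge0 : 0 <= L) (hF : A1 L F) (hG : A1 L G) (bF : A2 M F) (bG : A2 M G).
Hypotheses (delta_gt0 : 0 < delta) (xi_gt0 : 0 < xi) (xi_lt1 : xi < 1).

Let gQ := gradQ G ew z.
Let b := betabar F G delta ew z.
Let s := dotv (gradw F z) (lsubmx gQ).

Lemma enorm_gradQ_le_eta : 0 <= ew -> enorm gQ <= L * M * ew.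
Proof.
move=> ew0; apply: le_trans (hG.2 _ _) _.
have -> : z - joint (w1 G ew z) (rsubmx z) = row_mx (ew *: gradw G z) 0.
  rewrite /joint /w1 -{1}(hsubmxK z) opp_row_mx add_row_mx subrr.
  by rewrite opprB addrC subrK.
rewrite enorm_row_mx0 enormZ ger0_norm // -mulrA; apply: ler_wpM2l => //.
by rewrite mulrC; apply: ler_wpM2r => //; exact: enorm_gradw_le.
Qed.

Lemma enorm_gradQ_le_2M : enorm gQ <= 2 * M.
Proof.
apply: le_trans (ler_enormD _ _) _.
by rewrite enormN mulr2n mulrDl mul1r lerD ?(bG _).2.
Qed.

Lemma normr_dot_gradQ_le : `|s| <= enorm (gradw F z) * enorm gQ.
Proof.
apply: le_trans (CauchySchwarz_dotv _ _) _.
by rewrite ler_wpM2l ?enorm_ge0 ?enorm_lsubmx.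
Qed.

Lemma betabar_ge0 : 0 <= b.
Proof. by rewrite /b /betabar; case: ifP => // _; rewrite le_max lexx orbT. Qed.

Lemma betabar_enorm_gradQ_le : b * enorm gQ <= 2 * M * delta + M.
Proof.
have M0 := A2_ge0 bF.
have Q2M := enorm_gradQ_le_2M.
suff : b * enorm gQ <= delta * enorm gQ + enorm (gradw F z).
  have := enorm_gradw_le bF z; have := ltW delta_gt0; nra.
rewrite /b /betabar -/gQ; case: ifPn => [Q_neq0|_]; last first.
  by rewrite mul0r addr_ge0 ?mulr_ge0 ?enorm_ge0 ?ltW.
have N_gt0 : 0 < enorm gQ.
  by rewrite lt_def enorm_ge0 andbT; apply: contra Q_neq0 => /eqP/enorm_eq0 ->.
apply: le_trans (ler_wpM2r (enorm_ge0 _) (maxr_sub0_le _ (ltW delta_gt0))) _.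
rewrite -/s mulrDl lerD2l.
have -> : `|s / enorm gQ ^+ 2| * enorm gQ = `|s| / enorm gQ.
  rewrite normrM normfV normrX [`|enorm gQ|]ger0_norm ?enorm_ge0 //.
  by field; rewrite gt_eqF.
by rewrite ler_pdivrMr //; exact: normr_dot_gradQ_le.
Qed.

Lemma betabar_dot_ge : - delta * `|s| - enorm (gradw F z) ^+ 2 <= b * s.
Proof.
rewrite /b /betabar -/gQ -/s; case: ifPn => [Q_neq0|_]; last first.
  by rewrite mul0r subr_le0 (le_trans _ (sqr_ge0 _)) // nmulr_rle0 ?oppr_lt0.
have N2_gt0 : 0 < enorm gQ ^+ 2.
  by rewrite exprn_gt0 // lt_def enorm_ge0 andbT; apply: contra Q_neq0 => /eqP/enorm_eq0 ->.
have s2 : s ^+ 2 <= enorm (gradw F z) ^+ 2 * enorm gQ ^+ 2.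
  rewrite -exprMn -real_normK ?num_real // ler_sqr ?nnegrE ?mulr_ge0 ?enorm_ge0 //.
  exact: normr_dot_gradQ_le.
have [u su] : exists u, s = u * enorm gQ ^+ 2.
  by exists (s / enorm gQ ^+ 2); rewrite divfK ?gt_eqF.
rewrite su mulfK ?gt_eqF // normrM (ger0_norm (ltW N2_gt0)).
rewrite su exprMn [X in _ * X <= _]expr2 mulrA ler_pM2r // in s2.
have := ler_wpM2r (ltW N2_gt0) (maxr_sub0_mul_ge u (ltW delta_gt0)); nra.
Qed.

Let D := 2 * M * (1 + delta).

Lemma enorm_ebomlc_dir_le k (u v : 'rV[R]_k) :
  enorm u <= M -> enorm v <= enorm gQ -> enorm (u + (xi * b) *: v) <= D.
Proof.
move=> uM vQ; apply: le_trans (ler_enormD _ _) _.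
have xb_ge0 : 0 <= xi * b by rewrite mulr_ge0 ?betabar_ge0 // ltW.
rewrite enormZ ger0_norm //.
have xbv : xi * b * enorm v <= b * enorm gQ.
  apply: (@le_trans _ _ (b * enorm v)); last first.
    by apply: ler_wpM2l => //; exact: betabar_ge0.
  by rewrite -mulrA ler_piMl ?mulr_ge0 ?betabar_ge0 ?enorm_ge0 // ltW.
have := betabar_enorm_gradQ_le; rewrite /D; lra.
Qed.

Let dw := gradw F z + (xi * b) *: lsubmx gQ.
Let da := grada F z + (xi * b) *: rsubmx gQ.
Let z' := ebomlc_step F G delta xi ew ea z.

Lemma ebomlc_step_sub : z' - z = row_mx (- (ew *: dw)) (- (ea *: da)).
Proof.
rewrite /z' /ebomlc_step /joint -[X in _ - X = _](hsubmxK z) opp_row_mx add_row_mx.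
by congr row_mx; rewrite addrAC subrr add0r.
Qed.

Hypotheses (ea_ge0 : 0 <= ea) (ea_le_ew : ea <= ew).

Lemma enorm_ebomlc_step_sub_le : enorm (z' - z) <= 2 * D * ew.
Proof.
have dwD : enorm dw <= D.
  by apply: enorm_ebomlc_dir_le; [exact: enorm_gradw_le | exact: enorm_lsubmx].
have daD : enorm da <= D.
  by apply: enorm_ebomlc_dir_le; [exact: enorm_grada_le | exact: enorm_rsubmx].
have ew_ge0 : 0 <= ew := le_trans ea_ge0 ea_le_ew.
rewrite ebomlc_step_sub; apply: le_trans (enorm_row_mx_le _ _) _.
rewrite !enormN !enormZ !ger0_norm //.
have := ler_wpM2l ew_ge0 dwD; have := ler_wpM2l ea_ge0 daD.
have := ler_wpM2r (le_trans (enorm_ge0 _) daD) ea_le_ew; lra.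
Qed.

Lemma ebomlc_step_descent :
  F z' <= F z - (1 - xi) * ew * enorm (gradw F z) ^+ 2
          + (delta * L * M ^+ 2 + 4 * L * D ^+ 2) * ew ^+ 2 + M * D * ea.
Proof.
have ew_ge0 : 0 <= ew := le_trans ea_ge0 ea_le_ew.
have M_ge0 := A2_ge0 bF.
have -> : z' = (z' - z) + z by rewrite subrK.
apply: le_trans (descent_lemma hF.1 z (z' - z) L_ge0 hF.2) _.
rewrite [in dotv _ _]ebomlc_step_sub -[grad F z]hsubmxK dotv_row_mx !dotvNr !dotvZr.
rewrite -/(gradw F z) -/(grada F z) /dw dotvDr dotvZr -/s -enorm_sqr.
have s_le : `|s| <= M * (L * M * ew).
  apply: le_trans normr_dot_gradQ_le _.
  by apply: ler_pM; rewrite ?enorm_ge0 ?enorm_gradw_le ?enorm_gradQ_le_eta.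
have bs_ge : - delta * `|s| - xi * enorm (gradw F z) ^+ 2 <= xi * b * s.
  have := ler_wpM2l (ltW xi_gt0) betabar_dot_ge.
  have : 0 <= (1 - xi) * (delta * `|s|).
    by apply: mulr_ge0; [rewrite subr_ge0 ltW | exact: mulr_ge0 (ltW _) (normr_ge0 _)].
  lra.
have dot_da : - dotv (grada F z) da <= M * D.
  apply: le_trans (ler_norm _) _; rewrite normrN.
  apply: le_trans (CauchySchwarz_dotv _ _) _.
  apply: ler_pM; rewrite ?enorm_ge0 ?enorm_grada_le //.
  by apply: enorm_ebomlc_dir_le; [exact: enorm_grada_le | exact: enorm_rsubmx].
have step_sqr : enorm (z' - z) ^+ 2 <= (2 * D * ew) ^+ 2.
  have step_le := enorm_ebomlc_step_sub_le.
  by rewrite ler_sqr ?nnegrE ?enorm_ge0 // (le_trans (enorm_ge0 _) step_le).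
have := ler_wpM2l L_ge0 step_sqr; have := ler_wpM2l ea_ge0 dot_da.
have := ler_wpM2l ew_ge0 bs_ge.
have := ler_wpM2l ew_ge0 (ler_wpM2l (ltW delta_gt0) s_le).
lra.
Qed.

End Step.

Section PartialSums.
Variables (R : realType) (f : nat -> R).
Hypothesis f_ge0 : forall t, (1 <= t)%N -> 0 <= f t.

Let S n := \sum_(1 <= t < n) f t.

Lemma sumr_nat_ge0 m n : (1 <= m)%N -> 0 <= \sum_(m <= t < n) f t.
Proof.
move=> m1; rewrite big_nat_cond; apply: sumr_ge0 => t /andP[/andP[mt _] _].
exact/f_ge0/(leq_trans m1).
Qed.

Lemma partial_sum_split m n :
  (1 <= m)%N -> (m <= n)%N -> S n = S m + \sum_(m <= t < n) f t.
Proof. by move=> m1 mn; rewrite /S (@big_cat_nat _ _ _ m). Qed.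

Lemma partial_sum_nondecreasing : {homo S : m n / (m <= n)%N >-> m <= n}.
Proof.
move=> [|m] n mn; first by rewrite /S big_geq // sumr_nat_ge0.
by rewrite (@partial_sum_split m.+1 n) // lerDl sumr_nat_ge0.
Qed.

Lemma partial_sum_le_lim : cvgn S -> forall n, S n <= limn S.
Proof. exact/nondecreasing_cvgn_le/partial_sum_nondecreasing. Qed.

Lemma partial_sum_tail_small (C tau : R) : (forall n, S n <= C) -> 0 < tau ->
  exists2 N, (1 <= N)%N & forall m n, (N <= m)%N -> \sum_(m <= t < n) f t <= tau.
Proof.
move=> S_le tau_gt0.
have S_cvg : cvgn S.
  by apply: nondecreasing_is_cvgn; [exact: partial_sum_nondecreasing | exists C => _ [n _ <-]].
have [N _ SN] := (cvgrPdist_lt _ _).1 S_cvg tau tau_gt0.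
exists (maxn N 1) => [|m n]; first by rewrite leq_maxr.
rewrite geq_max => /andP[Nm m1].
have [mn|nm] := leqP m n; last by rewrite big_geq ?ltW // ltnW.
have := SN m Nm; have := partial_sum_le_lim S_cvg n.
rewrite /= (@partial_sum_split m n) // ger0_norm ?subr_ge0 ?partial_sum_le_lim //.
lra.
Qed.

End PartialSums.

Lemma partial_sum_lincomb_le (R : realType) (f g : nat -> R) (c d : R) :
  0 <= c -> 0 <= d ->
  (forall t, (1 <= t)%N -> 0 <= f t) -> (forall t, (1 <= t)%N -> 0 <= g t) ->
  cvgn (fun n => \sum_(1 <= t < n) f t) -> cvgn (fun n => \sum_(1 <= t < n) g t) ->
  forall n, \sum_(1 <= t < n) (c * f t + d * g t) <=
    c * limn (fun n => \sum_(1 <= t < n) f t) + d * limn (fun n => \sum_(1 <= t < n) g t).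
Proof.
move=> c0 d0 f0 g0 fcvg gcvg n; rewrite big_split /= -!mulr_sumr.
by apply: lerD; apply: ler_wpM2l => //; exact: partial_sum_le_lim.
Qed.

Lemma sum_descent_bounded (R : realType) (f a e : nat -> R) (c M E : R) :
  0 < c -> (forall t, `|f t| <= M) -> (forall n, \sum_(1 <= t < n) e t <= E) ->
  (forall t, (1 <= t)%N -> f t.+1 <= f t - c * a t + e t) ->
  forall n, \sum_(1 <= t < n) a t <= (2 * M + E) / c.
Proof.
move=> c_gt0 f_le e_le descent [|n].
  rewrite big_geq // divr_ge0 ?(ltW c_gt0) //.
  have := e_le 0%N; rewrite big_geq // => E_ge0.
  by have := le_trans (normr_ge0 _) (f_le 0%N); lra.
have telescope : c * \sum_(1 <= t < n.+1) a t <= f 1%N - f n.+1 + \sum_(1 <= t < n.+1) e t.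
  elim: n => [|n IH]; first by rewrite !big_geq // mulr0 subrr addr0.
  rewrite !(big_nat_recr n.+1) //=; have := descent n.+1 isT; lra.
rewrite ler_pdivlMr // mulrC; apply: le_trans telescope _.
have := e_le n.+1; have := f_le 1%N; have := f_le n.+1; rewrite !ler_norml.
by move=> /andP[? ?] /andP[? ?]; lra.
Qed.

Section VanishingSequence.
Variables (R : realType) (a b : nat -> R) (K : R).
Hypotheses (a_gt0 : forall t, (1 <= t)%N -> 0 < a t) (b_ge0 : forall t, 0 <= b t).
Hypothesis b_lipschitz : forall t, (1 <= t)%N -> `|b t.+1 - b t| <= K * a t.

Let a_ge0 t : (1 <= t)%N -> 0 <= a t. Proof. by move/a_gt0/ltW. Qed.

Lemma lipschitz_sum_lower m n :
  (1 <= m)%N -> (m <= n)%N -> b m - K * \sum_(m <= t < n) a t <= b n.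
Proof.
move=> m1 /subnKC <-; elim: (n - m)%N => [|k IH].
  by rewrite addn0 big_geq // mulr0 subr0.
rewrite addnS big_nat_recr ?leq_addr //= mulrDr.
have := b_lipschitz (leq_trans m1 (leq_addr k m)); rewrite ler_norml => /andP[lip _].
lra.
Qed.

Lemma sum_weighted_sqr_ge m n c : (1 <= m)%N -> 0 <= c ->
    (forall t, (m <= t < n)%N -> c <= b t) ->
  (\sum_(m <= t < n) a t) * c ^+ 2 <= \sum_(m <= t < n) a t * b t ^+ 2.
Proof.
move=> m1 c0 bc; rewrite mulr_suml; apply: ler_sum_nat => t /andP[mt tn].
apply: ler_wpM2l; first exact/a_ge0/(leq_trans m1).
have ct : c <= b t by apply: bc; rewrite mt tn.
by rewrite ler_sqr ?nnegrE.
Qed.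

Let K_ge0 : 0 <= K.
Proof.
have := le_trans (normr_ge0 _) (b_lipschitz (leqnn 1)).
by rewrite pmulr_lge0 // a_gt0.
Qed.

Lemma stays_above m c tau : (1 <= m)%N -> 0 < c -> K * tau <= c ^+ 3 ->
    2 * c <= b m -> (forall n, \sum_(m <= t < n) a t * b t ^+ 2 <= tau) ->
  forall n, (m <= n)%N -> c <= b n.
Proof.
move=> m1 c_gt0 Ktau bm tail; elim/ltn_ind => n IH mn.
have A_le : (\sum_(m <= t < n) a t) * c ^+ 2 <= tau.
  apply: le_trans (tail n); apply: sum_weighted_sqr_ge => // [|t /andP[mt tn]].
    exact: ltW.
  exact: IH.
have KA_le : K * \sum_(m <= t < n) a t <= c.
  rewrite -(ler_pM2r (exprn_gt0 2 c_gt0)) -mulrA -exprS.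
  exact: le_trans (ler_wpM2l K_ge0 A_le) Ktau.
have := lipschitz_sum_lower m1 mn; lra.
Qed.

Lemma weighted_sqr_bounded_cvg0 (C : R) :
  (fun n => \sum_(1 <= t < n) a t) @ \oo --> +oo ->
  (forall n, \sum_(1 <= t < n) a t * b t ^+ 2 <= C) ->
  b @ \oo --> 0.
Proof.
move=> a_div S_le; apply/cvgrPdist_le => e e_gt0.
have c_gt0 : 0 < e / 2 by rewrite divr_gt0.
have K1_gt0 : 0 < K + 1 by have := K_ge0; lra.
pose tau := (e / 2) ^+ 3 / (K + 1).
have tau_gt0 : 0 < tau by rewrite divr_gt0 ?exprn_gt0.
have Ktau : K * tau <= (e / 2) ^+ 3.
  rewrite /tau mulrA ler_pdivrMr // mulrC.
  by apply: ler_wpM2l; [exact/ltW/exprn_gt0 | lra].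
have ab_ge0 t : (1 <= t)%N -> 0 <= a t * b t ^+ 2 by move/a_ge0/mulr_ge0; apply; exact: sqr_ge0.
have [N N1 tail] := partial_sum_tail_small ab_ge0 S_le tau_gt0.
exists N => // m /= Nm; rewrite sub0r normrN ger0_norm // leNgt; apply/negP => b_gt.
have m1 : (1 <= m)%N := leq_trans N1 Nm.
have bm : 2 * (e / 2) <= b m by rewrite mulrC divfK ?pnatr_eq0 // ltW.
have above := stays_above m1 c_gt0 Ktau bm (fun n => tail m n Nm).
have A_le n : \sum_(m <= t < n) a t <= tau / (e / 2) ^+ 2.
  rewrite ler_pdivlMr ?exprn_gt0 //; apply: le_trans (tail m n Nm).
  by apply: sum_weighted_sqr_ge => // [|t /andP[mt _]]; [exact: ltW | exact: above].
have /cvgryPge/(_ (\sum_(1 <= t < m) a t + tau / (e / 2) ^+ 2 + 1)) := a_div.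
case=> n0 _ /(_ (maxn n0 m) (leq_maxl _ _)) /=.
rewrite (@partial_sum_split _ a m (maxn n0 m)) ?leq_maxr //.
have := A_le (maxn n0 m); lra.
Qed.

End VanishingSequence.

Unset Implicit Arguments.
Theorem theorem2 (R : realType) (p q : nat)
  (F G : 'rV[R]_(p + q) -> R) (L M delta xi : R)
  (etaw etaa : nat -> R) (z : nat -> 'rV[R]_(p + q)) :
  0 < L ->
  A1 L F -> A1 L G -> A2 M F -> A2 M G ->
  0 < delta -> 0 < xi -> xi < 1 ->
  (forall t, (1 <= t)%N -> 0 < etaa t) ->
  (forall t, (1 <= t)%N -> 0 < etaw t) ->
  cvg ([sequence \sum_(1 <= t < n) etaa t]_n @ \oo) ->
  [sequence \sum_(1 <= t < n) etaw t]_n @ \oo --> +oo ->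
  cvg ([sequence \sum_(1 <= t < n) etaw t ^+ 2]_n @ \oo) ->
  (forall t, (1 <= t)%N ->
     etaa t < etaw t /\ etaw t < Num.min ((1 - xi) / L) 1) ->
  (forall t, (1 <= t)%N ->
     z t.+1 = ebomlc_step F G delta xi (etaw t) (etaa t) (z t)) ->
  (fun t => enorm (gradw F (z t))) @ \oo --> (0 : R).
Proof.
move=> L_gt0 hF hG bF bG delta_gt0 xi_gt0 xi_lt1 ea_gt0 ew_gt0 ea_cvg ew_div ew2_cvg
  rates zS.
have ea_le_ew t : (1 <= t)%N -> etaa t <= etaw t by move/rates=> [/ltW].
have [M_ge0 L_ge0 delta_ge0] := And3 (A2_ge0 bF) (ltW L_gt0) (ltW delta_gt0).
pose D := 2 * M * (1 + delta).
pose K := delta * L * M ^+ 2 + 4 * L * D ^+ 2.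
have K_ge0 : 0 <= K by apply: addr_ge0; apply: mulr_ge0; rewrite ?sqr_ge0 ?mulr_ge0.
have MD_ge0 : 0 <= M * D by rewrite !mulr_ge0 ?addr_ge0.
have err_le := partial_sum_lincomb_le K_ge0 MD_ge0 (fun t _ => sqr_ge0 (etaw t))
  (fun t t1 => ltW (ea_gt0 t t1)) ew2_cvg ea_cvg.
apply: (weighted_sqr_bounded_cvg0 ew_gt0 _ (K := L * (2 * D))) ew_div
  (sum_descent_bounded (c := 1 - xi) (f := fun t => F (z t)) _ (fun t => (bF _).1) err_le _).
- by move=> t; exact: enorm_ge0.
- move=> t t1; rewrite zS //; apply: le_trans (enorm_gradw_lipschitz hF _ _) _.
  rewrite -mulrA; apply: ler_wpM2l; first exact: ltW.
  exact: enorm_ebomlc_step_sub_le bF bG delta_gt0 xi_gt0 xi_lt1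
    (ltW (ea_gt0 t t1)) (ea_le_ew t t1).
- by rewrite subr_gt0.
- move=> t t1; rewrite zS // /= mulrA addrA.
  exact: ebomlc_step_descent (ltW L_gt0) hF hG bF bG delta_gt0 xi_gt0 xi_lt1
    (ltW (ea_gt0 t t1)) (ea_le_ew t t1).
Qed.
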